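(* Let $\phi:(\mathcal C,S)\to(\mathcal D,T)$ be an admissible morphism from a finite quasi-schemoid $(\mathcal C,S)$ whose underlying category is a groupoid to a basic quasi-schemoid $(\mathcal D,T)$. Then for each $\sigma\in S$ there is a positive integer $n^\phi_\sigma$ such that for every $x\in ob(\mathcal C)$ and every $g\in\phi(\sigma)$ with $t(g)=\phi(x)$, $$\#\big(\phi^{-1}(g)\cap x\sigma\big)=n^\phi_\sigma,$$ where $x\sigma=\{f\in\sigma: t(f)=x\}$.
   Context: Write $s(f),t(f)$ for source and target. A quasi-schemoid is a pair $(\mathcal C,S)$ with $\mathcal C$ a small category and $S$ a partition of $mor(\mathcal C)$ into nonempty blocks such that for all $\sigma,\tau,\mu\in S$ and $f,g\in\mu$ the sets $\{(a,b)\in\sigma\times\tau: s(a)=t(b), a\circ b=f\}$ and the analogous set for $g$ have equal cardinality, denoted $p^\mu_{\sigma\tau}$. It is finite if $mor(\mathcal C)$ is finite; unital if every block meeting $\{1_x:x\in ob(\mathcal C)\}$ is contained in it; basic if it is unital and $\mathcal C$ is a groupoid. A morphism of quasi-schemoids $\phi$ is a functor such that each $\phi(\sigma)$ lies in a (unique) block of the target; by abuse, $\phi(\sigma)$ denotes that block. $\phi$ is admissible if for every $x\in ob(\mathcal C)$, $\sigma\in S$ and $g\in\phi(\sigma)$ with $t(g)=\phi(x)$ there exists $f\in\sigma$ with $t(f)=x$ and $\phi(f)=g$. *)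

From Stdlib Require Import List Arith.

Set Implicit Arguments.
Unset Strict Implicit.

(* A small category, with composition a total function that is only
   constrained on composable pairs (s(a) = t(b) for a o b). *)
Record category := Category {
  Ob : Type;
  Mor : Type;
  src : Mor -> Ob;
  tgt : Mor -> Ob;
  idm : Ob -> Mor;
  comp : Mor -> Mor -> Mor;          (* comp a b = a o b *)
  src_idm : forall x, src (idm x) = x;
  tgt_idm : forall x, tgt (idm x) = x;
  src_comp : forall a b, src a = tgt b -> src (comp a b) = src b;
  tgt_comp : forall a b, src a = tgt b -> tgt (comp a b) = tgt a;
  comp_idl : forall f, comp (idm (tgt f)) f = f;
  comp_idr : forall f, comp f (idm (src f)) = f;
  comp_assoc : forall a b c, src a = tgt b -> src b = tgt c ->
                 comp a (comp b c) = comp (comp a b) c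
}.

Definition equinumerous (A B : Type) : Prop :=
  exists (f : A -> B) (g : B -> A),
    (forall a, g (f a) = a) /\ (forall b, f (g b) = b).

Definition is_equivalence (A : Type) (R : A -> A -> Prop) : Prop :=
  (forall a, R a a) /\ (forall a b, R a b -> R b a) /\
  (forall a b c, R a b -> R b c -> R a c).

(* A partition of mor(C) into nonempty blocks is given by an equivalence
   relation S; the block of f is {h | S f h}. *)
Definition quasi_schemoid (C : category) (S : Mor C -> Mor C -> Prop) : Prop :=
  is_equivalence S /\
  forall (sig tau f g : Mor C), S f g ->
    equinumerous
      {ab : Mor C * Mor C | S sig (fst ab) /\ S tau (snd ab) /\
         src (fst ab) = tgt (snd ab) /\ comp (fst ab) (snd ab) = f}
      {ab : Mor C * Mor C | S sig (fst ab) /\ S tau (snd ab) /\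
         src (fst ab) = tgt (snd ab) /\ comp (fst ab) (snd ab) = g}.

Definition finite_mor (C : category) : Prop :=
  exists l : list (Mor C), forall f, In f l.

Definition unital (C : category) (S : Mor C -> Mor C -> Prop) : Prop :=
  forall (x : Ob C) (f : Mor C), S (idm x) f -> exists y, f = idm y.

Definition groupoid (C : category) : Prop :=
  forall f : Mor C, exists h : Mor C,
    src h = tgt f /\ tgt h = src f /\
    comp f h = idm (tgt f) /\ comp h f = idm (src f).

Definition basic (C : category) (S : Mor C -> Mor C -> Prop) : Prop :=
  unital S /\ groupoid C.

Definition is_functor (C D : category) (Fo : Ob C -> Ob D) (Fm : Mor C -> Mor D)
  : Prop :=
  (forall f, src (Fm f) = Fo (src f)) /\
  (forall f, tgt (Fm f) = Fo (tgt f)) /\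
  (forall x, Fm (idm x) = idm (Fo x)) /\
  (forall a b, src a = tgt b -> Fm (comp a b) = comp (Fm a) (Fm b)).

Definition qs_morphism (C D : category) (S : Mor C -> Mor C -> Prop)
  (T : Mor D -> Mor D -> Prop) (Fo : Ob C -> Ob D) (Fm : Mor C -> Mor D)
  : Prop :=
  is_functor Fo Fm /\ (forall f f', S f f' -> T (Fm f) (Fm f')).

(* admissibility; the block sigma is represented by any f0 in it, and
   phi(sigma) is the T-block of Fm f0 *)
Definition admissible (C D : category) (S : Mor C -> Mor C -> Prop)
  (T : Mor D -> Mor D -> Prop) (Fo : Ob C -> Ob D) (Fm : Mor C -> Mor D)
  : Prop :=
  forall (x : Ob C) (f0 : Mor C) (g : Mor D),
    T (Fm f0) g -> tgt g = Fo x ->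
    exists f, S f0 f /\ tgt f = x /\ Fm f = g.

From Stdlib Require Import List Arith Lia.
From Stdlib Require Import ClassicalEpsilon FunctionalExtensionality.
From Stdlib Require Import PropExtensionality ProofIrrelevance.

Set Implicit Arguments.
Unset Strict Implicit.

(* Proof of Lemma 6.5.  Write K for the kernel of phi, i.e. the morphisms
   sent to identities; unitality of T and the fact that phi maps blocks into
   blocks make K a union of S-blocks.  For f1 in sigma, the fibre
     F(f1) = { f in sigma | phi f = phi f1, t f = t f1 }
   is in bijection, via f |-> (f, f^-1 o f1) in the groupoid C, with the set
   of factorisations f1 = a o b with a in sigma and b in K.  Splitting the
   latter set along the S-blocks tau contained in K, each piece has
   cardinality p^{[f1]}_{sigma tau}, so its cardinality only depends on the
   block of f1.  Admissibility gives every fibre phi^{-1}(g) /\ x sigma the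
   form F(f1) with f1 in sigma, hence they are all equinumerous with F(sigma),
   which is finite and contains sigma; n is its cardinality. *)

Lemma equinumerous_sym (A B : Type) : equinumerous A B -> equinumerous B A.
Proof. intros [f [g [hgf hfg]]]. exists g, f. split; assumption. Qed.

Lemma equinumerous_trans (A B C : Type) :
  equinumerous A B -> equinumerous B C -> equinumerous A C.
Proof.
  intros [f [g [hgf hfg]]] [f' [g' [hgf' hfg']]].
  exists (fun a => f' (f a)), (fun c => g (g' c)).
  split; intros; [rewrite hgf', hgf | rewrite hfg, hfg']; reflexivity.
Qed.

(* Total functions f, g restricting to mutually inverse bijections between
   the subsets P and Q; this avoids dependent types when building bijections. *)
Definition bijective_on (A B : Type) (P : A -> Prop) (Q : B -> Prop)
  (f : A -> B) (g : B -> A) : Prop :=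
  (forall a, P a -> Q (f a) /\ g (f a) = a) /\
  (forall b, Q b -> P (g b) /\ f (g b) = b).

Lemma sig_eq (A : Type) (P : A -> Prop) (u v : {a | P a}) :
  proj1_sig u = proj1_sig v -> u = v.
Proof. destruct u, v; simpl; intros ->. f_equal. apply proof_irrelevance. Qed.

Lemma equinumerous_of_bijective_on (A B : Type) (P : A -> Prop) (Q : B -> Prop)
  (f : A -> B) (g : B -> A) :
  bijective_on P Q f g -> equinumerous {a | P a} {b | Q b}.
Proof.
  intros [hf hg].
  exists (fun u => exist Q (f (proj1_sig u)) (proj1 (hf _ (proj2_sig u)))),
         (fun v => exist P (g (proj1_sig v)) (proj1 (hg _ (proj2_sig v)))).
  split; intros [a pa]; apply sig_eq; simpl; [apply hf | apply hg]; assumption.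
Qed.

Lemma bijective_on_of_equinumerous (A B : Type) (P : A -> Prop) (Q : B -> Prop)
  (a0 : A) (b0 : B) :
  equinumerous {a | P a} {b | Q b} -> exists f g, bijective_on P Q f g.
Proof.
  intros [F [G [hGF hFG]]].
  exists (fun a => match excluded_middle_informative (P a) with
                   | left pa => proj1_sig (F (exist P a pa)) | right _ => b0 end).
  exists (fun b => match excluded_middle_informative (Q b) with
                   | left qb => proj1_sig (G (exist Q b qb)) | right _ => a0 end).
  split.
  - intros a pa. destruct (excluded_middle_informative (P a)) as [pa'|]; [|contradiction].
    split; [exact (proj2_sig _)|].
    destruct (excluded_middle_informative (Q _)) as [qb|nqb];
      [|destruct nqb; exact (proj2_sig _)].
    replace (exist Q _ qb) with (F (exist P a pa')) by (apply sig_eq; reflexivity).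
    rewrite hGF. reflexivity.
  - intros b qb. destruct (excluded_middle_informative (Q b)) as [qb'|]; [|contradiction].
    split; [exact (proj2_sig _)|].
    destruct (excluded_middle_informative (P _)) as [pa|npa];
      [|destruct npa; exact (proj2_sig _)].
    replace (exist P _ pa) with (G (exist Q b qb')) by (apply sig_eq; reflexivity).
    rewrite hFG. reflexivity.
Qed.

Lemma equinumerous_sig_ext (A : Type) (P P' : A -> Prop) :
  (forall a, P a <-> P' a) -> equinumerous {a | P a} {a | P' a}.
Proof.
  intros hPP'. apply (equinumerous_of_bijective_on (f := fun a => a) (g := fun a => a)).
  split; intros a h; split; auto; apply hPP'; assumption.
Qed.

Lemma bijective_on_add_point (A : Type) (P : A -> Prop) (x : A) (n : nat)
  (f : A -> nat) (g : nat -> A) :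
  P x -> bijective_on (fun a => P a /\ a <> x) (fun k => k < n) f g ->
  bijective_on P (fun k => k < S n)
    (fun a => if excluded_middle_informative (a = x) then n else f a)
    (fun k => if excluded_middle_informative (k = n) then x else g k).
Proof.
  intros px [hf hg]. split.
  - intros a pa. destruct (excluded_middle_informative (a = x)) as [->|nax].
    + split; [lia|]. destruct (excluded_middle_informative (n = n)); congruence.
    + destruct (hf a (conj pa nax)) as [hlt hgf]. split; [lia|].
      destruct (excluded_middle_informative (f a = n)); [lia | assumption].
  - intros k hk. destruct (excluded_middle_informative (k = n)) as [->|nkn].
    + split; [assumption|]. destruct (excluded_middle_informative (x = x)); congruence.
    + destruct (hg k ltac:(lia)) as [[pgk ngkx] hfg]. split; [assumption|].
      destruct (excluded_middle_informative (g k = x)); [contradiction | assumption].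
Qed.

Lemma finite_sig_count (A : Type) (a0 : A) (l : list A) (P : A -> Prop) :
  (forall a, P a -> In a l) -> exists n, equinumerous {a | P a} {k | k < n}.
Proof.
  intros hPl.
  enough (hcount : exists n f g, bijective_on P (fun k => k < n) f g).
  { destruct hcount as [n [f [g hfg]]]. exists n.
    exact (equinumerous_of_bijective_on hfg). }
  revert P hPl; induction l as [|x l IH]; intros P hPl.
  - exists 0, (fun _ => 0), (fun _ => a0).
    split; [intros a pa; destruct (hPl a pa) | intros k hk; lia].
  - destruct (IH (fun a => P a /\ a <> x)) as [n [f [g hfg]]].
    { intros a [pa nax]. destruct (hPl a pa) as [<-|]; [contradiction | assumption]. }
    destruct (excluded_middle_informative (P x)) as [px|npx].
    + exists (S n). eexists. eexists. exact (bijective_on_add_point px hfg).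
    + exists n, f, g. destruct hfg as [hf hg]. split.
      * intros a pa. apply hf. split; [assumption|]. intros ->. contradiction.
      * intros k hk. destruct (hg k hk) as [[pgk _] hfgk]. auto.
Qed.

Lemma equinumerous_count_pos (A : Type) (P : A -> Prop) (n : nat) (a : A) :
  equinumerous {a | P a} {k | k < n} -> P a -> 0 < n.
Proof.
  intros [f _] pa. destruct (f (exist P a pa)) as [k hk]. lia.
Qed.

Section UnionOfBlocks.

Variables (Y M : Type) (E : M -> M -> Prop) (lab : Y -> M).
Hypothesis hE : is_equivalence E.

Definition class_rep (m : M) : M := epsilon (inhabits m) (E m).

Lemma class_rep_spec (m : M) : E m (class_rep m).
Proof.
  destruct hE as [hrefl _]. unfold class_rep. apply epsilon_spec. exists m. apply hrefl.
Qed.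

Lemma class_rep_eq (m m' : M) : E m m' -> class_rep m = class_rep m'.
Proof.
  destruct hE as [hrefl [hsym htrans]]. intros hmm'. unfold class_rep.
  replace (E m') with (E m).
  - apply epsilon_inh_irrelevance. exists m. apply hrefl.
  - apply functional_extensionality. intros c.
    apply propositional_extensionality. split; eauto.
Qed.

(* One direction of the gluing: transporting an element along the bijection
   attached to the class of its label stays in a union K of classes, and the
   inverse chosen for the class of the new label undoes it. *)
Lemma transport_along_blocks (Q1 Q2 : Y -> Prop) (h h' : M -> Y -> Y)
  (K : M -> Prop) :
  (forall m m', K m -> E m m' -> K m') ->
  (forall tau y, Q1 y -> E tau (lab y) ->
     (Q2 (h tau y) /\ E tau (lab (h tau y))) /\ h' tau (h tau y) = y) ->
  forall y, Q1 y /\ K (lab y) ->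
    let y' := h (class_rep (lab y)) y in
    (Q2 y' /\ K (lab y')) /\ h' (class_rep (lab y')) y' = y.
Proof.
  destruct hE as [hrefl [hsym htrans]]. intros hK hblock y [q1 ky] y'.
  destruct (hblock (class_rep (lab y)) y q1 (hsym _ _ (class_rep_spec (lab y))))
    as [[q2 hlab'] hinv].
  assert (hsame : E (lab y) (lab y')) by (eapply htrans; [apply class_rep_spec | exact hlab']).
  split; [split; [assumption | exact (hK _ _ ky hsame)]|].
  rewrite <- (class_rep_eq hsame). exact hinv.
Qed.

Lemma union_of_blocks_equinumerous (P1 P2 : Y -> Prop) (y0 : Y) (K : M -> Prop) :
  (forall tau, equinumerous {y | P1 y /\ E tau (lab y)} {y | P2 y /\ E tau (lab y)}) ->
  (forall m m', K m -> E m m' -> K m') ->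
  equinumerous {y | P1 y /\ K (lab y)} {y | P2 y /\ K (lab y)}.
Proof.
  intros hblocks hK.
  destruct (choice (fun tau (fg : (Y -> Y) * (Y -> Y)) =>
              bijective_on (fun y => P1 y /\ E tau (lab y))
                           (fun y => P2 y /\ E tau (lab y)) (fst fg) (snd fg)))
    as [Phi hPhi].
  { intros tau. destruct (bijective_on_of_equinumerous y0 y0 (hblocks tau))
      as [f [g hfg]]. exists (f, g). exact hfg. }
  apply (equinumerous_of_bijective_on
           (f := fun y => fst (Phi (class_rep (lab y))) y)
           (g := fun y => snd (Phi (class_rep (lab y))) y)).
  split.
  - apply (transport_along_blocks (h := fun tau => fst (Phi tau))
                                  (h' := fun tau => snd (Phi tau)) hK).
    intros tau y p1 htau. exact (proj1 (hPhi tau) y (conj p1 htau)).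
  - apply (transport_along_blocks (h := fun tau => snd (Phi tau))
                                  (h' := fun tau => fst (Phi tau)) hK).
    intros tau y p2 htau. exact (proj2 (hPhi tau) y (conj p2 htau)).
Qed.

End UnionOfBlocks.

Lemma groupoid_inverse (C : category) :
  groupoid C -> exists inv : Mor C -> Mor C, forall f,
    src (inv f) = tgt f /\ tgt (inv f) = src f /\
    comp f (inv f) = idm (tgt f) /\ comp (inv f) f = idm (src f).
Proof. apply choice. Qed.

Definition factorisations (C : category) (A K : Mor C -> Prop) (f : Mor C)
  (ab : Mor C * Mor C) : Prop :=
  A (fst ab) /\ K (snd ab) /\ src (fst ab) = tgt (snd ab) /\
  comp (fst ab) (snd ab) = f.

(* In a quasi-schemoid, the number of factorisations through a block sigma
   followed by a union K of blocks depends only on the block of f: this sums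
   the structure constants p^{[f]}_{sigma tau} over the blocks tau in K. *)
Lemma factorisations_block_invariant (C : category) (S : Mor C -> Mor C -> Prop)
  (K : Mor C -> Prop) (sig f1 f2 : Mor C) :
  quasi_schemoid S -> (forall b b', K b -> S b b' -> K b') -> S f1 f2 ->
  equinumerous {ab | factorisations (S sig) K f1 ab}
               {ab | factorisations (S sig) K f2 ab}.
Proof.
  intros [hSeq hSq] hK h12.
  set (ends f (ab : Mor C * Mor C) :=
         S sig (fst ab) /\ src (fst ab) = tgt (snd ab) /\ comp (fst ab) (snd ab) = f).
  assert (hreorder : forall (L : Mor C -> Prop) f,
    equinumerous {ab | factorisations (S sig) L f ab} {ab | ends f ab /\ L (snd ab)}).
  { intros L f. apply equinumerous_sig_ext. unfold factorisations, ends. tauto. }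
  eapply equinumerous_trans; [apply hreorder|].
  eapply equinumerous_trans; [|apply equinumerous_sym, hreorder].
  apply (union_of_blocks_equinumerous (lab := snd) hSeq (sig, sig)); [|exact hK].
  intros tau.
  eapply equinumerous_trans; [apply equinumerous_sym, hreorder|].
  eapply equinumerous_trans; [|apply hreorder].
  exact (hSq sig tau f1 f2 h12).
Qed.

Section Fibres.

Variables (C D : category) (Fo : Ob C -> Ob D) (Fm : Mor C -> Mor D).
Hypothesis hF : is_functor Fo Fm.

Definition kernel (b : Mor C) : Prop := exists y, Fm b = idm y.

Lemma kernel_union_of_blocks (S : Mor C -> Mor C -> Prop)
  (T : Mor D -> Mor D -> Prop) :
  unital T -> (forall f f', S f f' -> T (Fm f) (Fm f')) ->
  forall b b', kernel b -> S b b' -> kernel b'.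
Proof.
  intros hunit hmap b b' [y hy] hbb'. apply (hunit y).
  rewrite <- hy. apply hmap. exact hbb'.
Qed.

Lemma fibre_factorisations (A : Mor C -> Prop) (f1 : Mor C) :
  groupoid C ->
  equinumerous {f | Fm f = Fm f1 /\ A f /\ tgt f = tgt f1}
               {ab | factorisations A kernel f1 ab}.
Proof.
  intros hgpd. destruct hF as [Fsrc [Ftgt [Fid Fcomp]]].
  destruct (groupoid_inverse hgpd) as [inv hinv].
  apply (equinumerous_of_bijective_on (f := fun a => (a, comp (inv a) f1))
                                      (g := fst)).
  split.
  - intros a [hFa [ha htgt]]. destruct (hinv a) as [i1 [i2 [i3 i4]]].
    split; [|reflexivity]. unfold factorisations; simpl.
    split; [assumption|]. split; [|split].
    + exists (Fo (src a)).
      rewrite Fcomp, <- hFa, <- Fcomp by congruence. rewrite i4. apply Fid.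
    + rewrite tgt_comp by congruence. congruence.
    + rewrite comp_assoc, i3, htgt by congruence. apply comp_idl.
  - intros [a b] [ha [[y hy] [hab hcomp]]]; simpl in *.
    destruct (hinv a) as [i1 [i2 [i3 i4]]].
    assert (hy_src : y = src (Fm a)).
    { rewrite Fsrc, hab, <- Ftgt, hy. symmetry. apply tgt_idm. }
    split; [split; [|split]|].
    + rewrite <- hcomp, Fcomp, hy, hy_src by assumption. symmetry. apply comp_idr.
    + assumption.
    + rewrite <- hcomp. symmetry. apply tgt_comp. assumption.
    + f_equal. rewrite <- hcomp, comp_assoc, i4, hab by congruence. apply comp_idl.
Qed.

End Fibres.

Theorem lemma6p5 (C D : category)
  (S : Mor C -> Mor C -> Prop) (T : Mor D -> Mor D -> Prop)
  (Fo : Ob C -> Ob D) (Fm : Mor C -> Mor D)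
  (hS : quasi_schemoid S) (hfin : finite_mor C) (hgpd : groupoid C)
  (hT : quasi_schemoid T) (hbas : basic T)
  (hphi : qs_morphism S T Fo Fm) (hadm : admissible S T Fo Fm) :
  forall sig : Mor C, exists n : nat, 0 < n /\
    forall (x : Ob C) (g : Mor D), T (Fm sig) g -> tgt g = Fo x ->
      equinumerous {f : Mor C | Fm f = g /\ S sig f /\ tgt f = x}
                   {k : nat | k < n}.
Proof.
  intros sig.
  destruct hphi as [hF hmap]. destruct hbas as [hunit _].
  pose proof hS as [[Srefl [Ssym _]] _].
  pose proof (kernel_union_of_blocks hunit hmap) as hker.
  destruct hfin as [l hl].
  destruct (@finite_sig_count _ sig l (fun f => Fm f = Fm sig /\ S sig f /\ tgt f = tgt sig)
              (fun a _ => hl a)) as [n hn].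
  exists n. split.
  - apply (equinumerous_count_pos (a := sig) hn). auto.
  - intros x g hg hx.
    destruct (hadm x sig g hg hx) as [f1 [hsig1 [<- <-]]].
    eapply equinumerous_trans; [exact (fibre_factorisations hF (S sig) f1 hgpd)|].
    eapply equinumerous_trans;
      [exact (factorisations_block_invariant sig hS hker (Ssym _ _ hsig1))|].
    eapply equinumerous_trans;
      [exact (equinumerous_sym (fibre_factorisations hF (S sig) sig hgpd))|].
    exact hn.
Qed.
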